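(* Let $A_1,A_2\subseteq A$ be nonempty and disjoint, $q\in Atom$, $\eta\in\{\mu,\nu\}$ and $\varphi\in\mathcal L^\mu_{CC}$ with $q$ occurring only positively in $\varphi$. Then $\models\exists_{(A_1,A_2)}\eta q.\varphi\to\eta q.\exists_{(A_1,A_2)}\varphi$.
   Context: Fix a finite set $A$ of actions and a countably infinite set $Atom$ of propositional letters. A model is $M=\langle S^M,R^M,V^M\rangle$ with $S^M\neq\emptyset$ a set of states, $R^M_b\subseteq S^M\times S^M$ for each $b\in A$, and $V^M:Atom\to 2^{S^M}$. A pointed model is $(M,s)$ with $s\in S^M$. Refinements: given $P\subseteq Atom$ and disjoint $A_1,A_2\subseteq A$, a relation $\mathcal Z\subseteq S^M\times S^{M'}$ is a $P$-restricted $(A_1,A_2)$-refinement between $M$ and $M'$ if for every pair $u\mathcal Z u'$: (atoms) $u\in V^M(r)$ iff $u'\in V^{M'}(r)$ for all $r\in Atom\setminus P$; (forth) for every $a\in A\setminus A_2$ and every $v$ with $uR^M_a v$ there is $v'$ with $u'R^{M'}_a v'$ and $v\mathcal Z v'$; (back) for every $a\in A\setminus A_1$ and every $v'$ with $u'R^{M'}_a v'$ there is $v$ with $uR^M_a v$ and $v\mathcal Z v'$. Write $M,u\succeq^P_{(A_1,A_2)}M',u'$ if such a $\mathcal Z$ exists with $u\mathcal Z u'$; the superscript is omitted when $P=\emptyset$. Language $\mathcal L^\mu_{CC}$: $\varphi::= r\mid\neg\varphi\mid\varphi\wedge\varphi\mid\Box_b\varphi\mid\exists_{(A_1,A_2)}\varphi\mid\mu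 q.\varphi$, where $r,q\in Atom$, $b\in A$, $A_1,A_2\subseteq A$ are nonempty and disjoint, and in $\mu q.\varphi$ the letter $q$ occurs only positively (under an even number of negations) in $\varphi$. Abbreviations: $\nu q.\varphi=\neg\mu q.\neg\varphi[\neg q/q]$; $\eta$ ranges over $\{\mu,\nu\}$. Semantics: $M,u\models r$ iff $u\in V^M(r)$; Boolean clauses as usual; $M,u\models\Box_b\varphi$ iff $M,v\models\varphi$ for all $v$ with $uR^M_bv$; $M,u\models\exists_{(A_1,A_2)}\varphi$ iff there is a pointed model $(N,v)$ with $M,u\succeq_{(A_1,A_2)}N,v$ and $N,v\models\varphi$; $M,u\models\mu q.\varphi$ iff $u\in\bigcap\{T\subseteq S^M:\|\varphi\|^{M[q\mapsto T]}\subseteq T\}$, where $\|\varphi\|^M=\{s:M,s\models\varphi\}$ and $M[q\mapsto T]$ is $M$ with $V(q)$ replaced by $T$ (so $\nu q.\varphi$ denotes the greatest fixed point). $\models\psi$ means $\psi$ holds at every pointed model. *)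

From mathcomp Require Import all_boot.
Unset Printing Implicit Defensive.

Definition atom := nat.

Section Logic.
Variable A : finType.

Inductive form : Type :=
| FAtom : atom -> form
| FNeg : form -> form
| FAnd : form -> form -> form
| FBox : A -> form -> form
| FEx : {set A} -> {set A} -> form -> form
| FMu : atom -> form -> form.

Fixpoint pos (q : atom) (f : form) : bool :=
  match f with
  | FAtom _ => true
  | FNeg g => neg q g
  | FAnd g h => pos q g && pos q h
  | FBox _ g => pos q g
  | FEx _ _ g => pos q g
  | FMu p g => (p == q) || pos q g
  end
with neg (q : atom) (f : form) : bool :=
  match f with
  | FAtom r => r != q
  | FNeg g => pos q g
  | FAnd g h => neg q g && neg q h
  | FBox _ g => neg q g
  | FEx _ _ g => neg q g
  | FMu p g => (p == q) || neg q g
  end.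

Fixpoint wf (f : form) : bool :=
  match f with
  | FAtom _ => true
  | FNeg g => wf g
  | FAnd g h => wf g && wf h
  | FBox _ g => wf g
  | FEx A1 A2 g => [&& A1 != set0, A2 != set0, [disjoint A1 & A2] & wf g]
  | FMu q g => pos q g && wf g
  end.

Fixpoint subst_neg (q : atom) (f : form) : form :=
  match f with
  | FAtom r => if r == q then FNeg (FAtom r) else FAtom r
  | FNeg g => FNeg (subst_neg q g)
  | FAnd g h => FAnd (subst_neg q g) (subst_neg q h)
  | FBox b g => FBox b (subst_neg q g)
  | FEx A1 A2 g => FEx A1 A2 (subst_neg q g)
  | FMu p g => if p == q then FMu p g else FMu p (subst_neg q g)
  end.

Definition FNu (q : atom) (f : form) : form := FNeg (FMu q (FNeg (subst_neg q f))).
Definition FImp (f g : form) : form := FNeg (FAnd f (FNeg g)).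

Inductive fixkind := KMu | KNu.
Definition FFix (k : fixkind) (q : atom) (f : form) : form :=
  match k with KMu => FMu q f | KNu => FNu q f end.

Record model : Type := Model {
  St : Type;
  Rel : A -> St -> St -> Prop;
  Val : atom -> St -> Prop }.

Definition upd (M : model) (q : atom) (T : St M -> Prop) : model :=
  {| St := St M; Rel := Rel M; Val := fun r => if r == q then T else Val M r |}.

(* (A1,A2)-refinement (P = empty): M,u >= N,v *)
Definition refines (A1 A2 : {set A}) (M : model) (u : St M) (N : model) (v : St N) : Prop :=
  exists Z : St M -> St N -> Prop,
    Z u v /\
    forall x x', Z x x' ->
      (forall r, Val M r x <-> Val N r x') /\
      (forall a, a \notin A2 -> forall y, Rel M a x y -> exists y', Rel N a x' y' /\ Z y y') /\
      (forall a, a \notin A1 -> forall y', Rel N a x' y' -> exists y, Rel M a x y /\ Z y y').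

Fixpoint sat (f : form) : forall M : model, St M -> Prop :=
  match f with
  | FAtom r => fun M u => Val M r u
  | FNeg g => fun M u => ~ sat g M u
  | FAnd g h => fun M u => sat g M u /\ sat h M u
  | FBox b g => fun M u => forall v, Rel M b u v -> sat g M v
  | FEx A1 A2 g => fun M u =>
      exists (N : model) (v : St N), refines A1 A2 M u N v /\ sat g N v
  | FMu q g => fun M u =>
      forall T : St M -> Prop,
        (forall s, sat g (upd M q T) s -> T s) -> T u
  end.

Definition valid (f : form) : Prop := forall (M : model) (u : St M), sat f M u.

End Logic.

Arguments FAtom {A} _.
Arguments FNeg {A} _.
Arguments FAnd {A} _ _.
Arguments FBox {A} _ _.
Arguments FEx {A} _ _ _.
Arguments FMu {A} _ _.
Arguments pos {A} _ _.
Arguments neg {A} _ _.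
Arguments wf {A} _.
Arguments subst_neg {A} _ _.
Arguments FNu {A} _ _.
Arguments FImp {A} _ _.
Arguments FFix {A} _ _ _.
Arguments St {A} _.
Arguments Rel {A} _ _ _ _.
Arguments Val {A} _ _ _.
Arguments upd {A} _ _ _.
Arguments refines {A} _ _ _ _ _ _.
Arguments sat {A} _ _ _.
Arguments valid {A} _.

From mathcomp Require Import all_boot.
From Stdlib Require Import Classical FunctionalExtensionality PropExtensionality.

(* If [N, v] refines [M, u] via [W] and [Z] is a bisimulation from [M] to [M'],
   gluing [M'] and [N] along the composite relation (with a spare copy of [N]
   for the [A1]-moves) yields a refinement of [M', u'] that is bisimilar to
   [N, v]; when [Z] only lets some atoms grow and others shrink, satisfaction of
   formulas with matching polarities carries over along it.
   For the fixpoints, a prefixed point [T] of [exists phi] on [M] pulls back to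
   the prefixed point [{n | forall x, W x n -> T x}] of [phi] on [N]; dually a
   postfixed point [U] of [phi] on [N] pushes forward to the postfixed point
   [{x | exists n, W x n /\ U n}] of [exists phi] (Knaster-Tarski, [sat_FNuP]).
   In both cases the step from [phi] to [exists phi] is the gluing construction
   with [q] allowed to grow. *)

Set Implicit Arguments.
Unset Strict Implicit.

Section Simulations.
Variables (A : finType) (M M' : model A).
Implicit Types (Z : St M -> St M' -> Prop) (Up Down : atom -> Prop).

Definition zigzag Z : Prop := forall x x', Z x x' ->
  (forall a y, Rel M a x y -> exists y', Rel M' a x' y' /\ Z y y') /\
  (forall a y', Rel M' a x' y' -> exists y, Rel M a x y /\ Z y y').

Definition refines_rel (B1 B2 : {set A}) Z : Prop := forall x x', Z x x' ->
  (forall a, a \notin B2 -> forall y, Rel M a x y -> exists y', Rel M' a x' y' /\ Z y y') /\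
  (forall a, a \notin B1 -> forall y', Rel M' a x' y' -> exists y, Rel M a x y /\ Z y y').

Definition val_mono Up Down (x : St M) (x' : St M') : Prop := forall r,
  (~ Down r -> Val M r x -> Val M' r x') /\ (~ Up r -> Val M' r x' -> Val M r x).

Definition mono_bisim Up Down Z : Prop :=
  zigzag Z /\ forall x x', Z x x' -> val_mono Up Down x x'.

Lemma refines_exists_rel B1 B2 u u' : refines B1 B2 M u M' u' ->
  exists Z, [/\ Z u u', refines_rel B1 B2 Z &
                forall x x', Z x x' -> forall r, Val M r x <-> Val M' r x'].
Proof. by case=> Z [Zuu' HZ]; exists Z; split=> // x x' /HZ [] // _ []. Qed.

End Simulations.

Lemma mono_bisim_sym (A : finType) (M M' : model A) Up Down (Z : St M -> St M' -> Prop) :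
  mono_bisim Up Down Z -> mono_bisim (M := M') (M' := M) Down Up (fun x' x => Z x x').
Proof.
case=> zzZ valZ; split=> [x' x /zzZ [forth back] | x' x /valZ valx r]; first by split.
by have [? ?] := valx r; split.
Qed.

Lemma mono_bisim_upd (A : finType) (M M' : model A) Up Down (Z : St M -> St M' -> Prop)
    p (T : St M -> Prop) (T' : St M' -> Prop) :
  mono_bisim Up Down Z -> (forall x x', Z x x' -> T x -> T' x') ->
  mono_bisim (M := upd M p T) (M' := upd M' p T')
    (fun r => r = p \/ Up r) (fun r => r <> p /\ Down r) Z.
Proof.
case=> zzZ valZ TT'; split=> [|x x' Zx r /=]; first exact: zzZ.
have [forth back] := valZ _ _ Zx r.
case: eqP => [->|ne]; split=> [nDown|nUp].
- exact: TT'.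
- by case: nUp; left.
- by apply: forth => Dr; apply: nDown.
- by apply: back => Ur; apply: nUp; right.
Qed.

Lemma refines_rel_comp (A : finType) B1 B2 (X Y N : model A)
    (Z : St X -> St Y -> Prop) (W : St X -> St N -> Prop) :
  zigzag Z -> refines_rel B1 B2 W ->
  refines_rel B1 B2 (fun y n => exists2 x, Z x y & W x n).
Proof.
move=> zzZ refW y n [x Zxy Wxn].
have [forthZ backZ] := zzZ _ _ Zxy; have [forthW backW] := refW _ _ Wxn.
split=> a Ha.
- move=> y1 /(backZ a) [x1 [Rx1 Z1]]; have [n1 [Rn1 W1]] := forthW a Ha x1 Rx1.
  by exists n1; split=> //; exists x1.
- move=> n1 /(backW a Ha) [x1 [Rx1 W1]]; have [y1 [Ry1 Z1]] := forthZ a x1 Rx1.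
  by exists y1; split=> //; exists x1.
Qed.

Section Gluing.
Variables (A : finType) (B1 B2 : {set A}) (Y N : model A) (V : St Y -> St N -> Prop).
Hypothesis refV : refines_rel B1 B2 V.

(* The copy [inr] of [N] absorbs the [B1]-moves of [N], which [Y] need not match. *)
Definition glue_rel (a : A) (p p' : St Y * St N + St N) : Prop :=
  match p, p' with
  | inl (y, n), inl (y', n') => [/\ Rel Y a y y', Rel N a n n' & V y' n']
  | inl (_, n), inr n' => a \in B1 /\ Rel N a n n'
  | inr n, inr n' => Rel N a n n'
  | inr _, inl _ => False
  end.

Definition glue_val (r : atom) (p : St Y * St N + St N) : Prop :=
  match p with inl (y, _) => Val Y r y | inr n => Val N r n end.

Definition glue : model A := {| St := St Y * St N + St N; Rel := glue_rel; Val := glue_val |}.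

Definition glue_sim (n : St N) (p : St glue) : Prop :=
  match p with inl (y, n') => n' = n /\ V y n | inr n' => n' = n end.

Lemma refines_glue y n : V y n -> refines B1 B2 Y y glue (inl (y, n)).
Proof.
move=> Vyn.
exists (fun y (p : St glue) => if p is inl (y', n) then y' = y /\ V y n else False).
split=> // y0 [[_ n0] [-> Vn0]|//]; have [forth _] := refV Vn0.
split=> //; split=> a Ha.
- move=> y1 Ry1; have [n1 [Rn1 V1]] := forth a Ha y1 Ry1.
  by exists (inl (y1, n1)).
- move=> [[y1 n1] [Ry1 _ V1]|n1 [Ha1 _]]; first by exists y1.
  by rewrite Ha1 in Ha.
Qed.

Lemma zigzag_glue_sim : zigzag glue_sim.
Proof.
move=> n [[y _] [-> Vyn]|_ ->]; split.
- move=> a n1 Rn1; case: (boolP (a \in B1)) => Ha; first by exists (inr n1).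
  have [_ back] := refV Vyn; have [y1 [Ry1 V1]] := back a Ha n1 Rn1.
  by exists (inl (y1, n1)).
- by move=> a [[y1 n1] [_ Rn1 V1]|n1 [_ Rn1]]; exists n1.
- by move=> a n1 Rn1; exists (inr n1).
- by move=> a [[y1 n1]|n1] //= Rn1; exists n1.
Qed.

Lemma glue_mono_bisim Up Down :
  (forall y n, V y n -> val_mono Up Down n y) -> mono_bisim Up Down glue_sim.
Proof.
move=> valV; split=> [|n]; first exact: zigzag_glue_sim.
by move=> [[y _] [-> /valV]|_ -> r].
Qed.

End Gluing.

Lemma sat_mono_bisim (A : finType) (phi : form A) : wf phi ->
  forall (M M' : model A) Up Down (Z : St M -> St M' -> Prop),
  mono_bisim Up Down Z ->
  (forall r, Up r -> pos r phi) -> (forall r, Down r -> neg r phi) ->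
  forall x x', Z x x' -> sat phi M x -> sat phi M' x'.
Proof.
elim: phi => [r|g IH|g IHg h IHh|b g IH|B1 B2 g IH|p g IH] /= wphi
  M M' Up Down Z monoZ posUp negDown x x' Zx.
- have [forth _] := monoZ.2 _ _ Zx r.
  by apply: forth => /negDown; rewrite eqxx.
- move=> ngx gx'; apply: ngx.
  exact: IH wphi _ _ _ _ _ (mono_bisim_sym monoZ) negDown posUp _ _ Zx gx'.
- case/andP: wphi => wg wh [gx hx]; split.
  + apply: IHg wg _ _ _ _ _ monoZ _ _ _ _ Zx gx => r; [move/posUp | move/negDown];
      by case/andP.
  + apply: IHh wh _ _ _ _ _ monoZ _ _ _ _ Zx hx => r; [move/posUp | move/negDown];
      by case/andP.
- move=> gx y' Ry'; have [y [Ry Zy]] := (monoZ.1 _ _ Zx).2 b y' Ry'.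
  exact: IH wphi _ _ _ _ _ monoZ posUp negDown _ _ Zy (gx _ Ry).
- case/and4P: wphi => _ _ _ wg [N [n [/refines_exists_rel [W [Wxn refW valW]] gn]]].
  pose V y m := exists2 x0, Z x0 y & W x0 m.
  have refV : refines_rel B1 B2 V := refines_rel_comp monoZ.1 refW.
  exists (glue B1 V), (inl (x', n)); split; first by apply: (refines_glue refV); exists x.
  have valV y m : V y m -> val_mono Up Down m y.
    move=> [x0 Zx0 Wx0] r; have [forth back] := monoZ.2 _ _ Zx0 r.
    have valr := valW _ _ Wx0 r.
    by split=> [nDown /valr /(forth nDown) | nUp /(back nUp) /valr].
  apply: (IH wg _ _ _ _ _ (glue_mono_bisim refV valV) posUp negDown n _ _ gn).
  by split=> //; exists x.
- case/andP: wphi => pg wg lfp T' preT'.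
  pose T y := forall y', Z y y' -> T' y'.
  apply: (lfp T _ x' Zx) => s gs s' Zs; apply: preT'.
  apply: IH wg _ _ _ _ _ (mono_bisim_upd p monoZ (T := T) (T' := T') _) _ _ _ _ Zs gs.
  + by move=> y y' Zy /(_ y' Zy).
  + move=> r [-> // | /posUp]; by case: eqP => [<-|].
  + move=> r [nrp /negDown]; case: eqP => // E; by rewrite E in nrp.
Qed.

Section Valuations.
Variable A : finType.
Implicit Types (phi : form A) (M N : model A).

Lemma sat_ext phi (S : Type) R (V V' : atom -> S -> Prop) s :
  (forall r s, V r s <-> V' r s) ->
  sat phi {| St := S; Rel := R; Val := V |} s <-> sat phi {| St := S; Rel := R; Val := V' |} s.
Proof.
move=> VV'; suff -> : V = V' by [].
apply: functional_extensionality => r; apply: functional_extensionality => s0.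
exact: propositional_extensionality.
Qed.

Lemma sat_upd_id phi M q : forall s, sat phi (upd M q (Val M q)) s <-> sat phi M s.
Proof. by case: M => S R V s; apply: sat_ext => r s0 /=; case: eqP => [->|]. Qed.

Lemma sat_upd_upd phi M q T T' : forall s,
  sat phi (upd (upd M q T) q T') s <-> sat phi (upd M q T') s.
Proof. by move=> s; apply: sat_ext => r s0 /=; case: eqP. Qed.

Lemma sat_upd_comm phi M p q S T : p <> q -> forall s,
  sat phi (upd (upd M p S) q T) s <-> sat phi (upd (upd M q T) p S) s.
Proof.
move=> npq s; apply: sat_ext => r s0 /=.
by case: eqP => [->|//]; case: eqP => // E; case: npq.
Qed.

Lemma sat_upd_notK phi M q T : forall s,
  sat phi (upd M q (fun s => ~ ~ T s)) s <-> sat phi (upd M q T) s.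
Proof.
move=> s; apply: sat_ext => r s0 /=; case: eqP => // _.
by split=> [|Ts nT]; [exact: NNPP | exact: nT].
Qed.

Lemma refines_val B1 B2 M N (VM : atom -> St M -> Prop) (VN : atom -> St N -> Prop) u v :
  refines B1 B2 M u N v ->
  (forall x x', (forall r, Val M r x <-> Val N r x') -> forall r, VM r x <-> VN r x') ->
  refines B1 B2 {| St := St M; Rel := Rel M; Val := VM |} u
                {| St := St N; Rel := Rel N; Val := VN |} v.
Proof.
case=> Z [Zuv HZ] transfer; exists Z; split=> // x x' /HZ [valx steps].
by split=> //; apply: transfer.
Qed.

End Valuations.

Lemma sat_subst_neg (A : finType) (phi : form A) M q (T : St M -> Prop) s :
  sat (subst_neg q phi) (upd M q T) s <-> sat phi (upd M q (fun s => ~ T s)) s.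
Proof.
elim: phi M T s => [r|g IH|g IHg h IHh|b g IH|B1 B2 g IH|p g IH] M T s /=.
- by case: eqP => [->|ne] /=; [rewrite eqxx | case: eqP].
- by rewrite IH.
- by rewrite IHg IHh.
- by split=> gs v Rv; apply/IH; apply: gs.
- split=> -[N [v [refN gN]]].
  + exists (upd N q (fun s => ~ Val N q s)), v; split; last by apply/IH/sat_upd_id.
    apply: (refines_val refN) => x x' valx r; have := valx r.
    case: eqP => [->|ne] /=; last by case: eqP.
    by rewrite eqxx => Tq; split=> nT ?; apply/nT/Tq.
  + exists (upd N q (fun s => ~ Val N q s)), v; split.
      apply: (refines_val refN) => x x' valx r; have := valx r.
      case: eqP => [->|ne] /=; last by case: eqP.
      rewrite eqxx => Tq.
      by split=> [Tx /Tq | nN]; [|apply: NNPP => nT; apply/nN/Tq].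
    by apply/IH/sat_upd_notK/sat_upd_id.
- case: eqP => [->|npq] /=; split=> lfp S preS; apply: lfp => s0 gs0; apply: preS.
  1,2: by apply/sat_upd_upd; move/sat_upd_upd: gs0.
  all: by apply/(sat_upd_comm _ npq)/IH; move/(sat_upd_comm _ npq): gs0.
Qed.

Lemma sat_FNuP (A : finType) (phi : form A) (M : model A) q s :
  sat (FNu q phi) M s <->
  exists2 T : St M -> Prop, (forall s, T s -> sat phi (upd M q T) s) & T s.
Proof.
have substE (T : St M -> Prop) s' :
    sat (subst_neg q phi) (upd M q (fun s => ~ T s)) s' <-> sat phi (upd M q T) s'.
  by rewrite sat_subst_neg sat_upd_notK.
split=> [ngfp | [T postT Ts] lfp].
- apply: NNPP => npost; apply: ngfp => T preT; apply: NNPP => nTs; apply: npost.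
  exists (fun s => ~ T s) => // s' nTs'.
  by apply/sat_subst_neg; apply: NNPP => nsubst; apply/nTs'/preT.
- apply: (lfp (fun s => ~ T s)) Ts => s' nsubst Ts'.
  by apply/nsubst/substE/postT.
Qed.

Lemma sat_FEx_upd (A : finType) B1 B2 (phi : form A) (M N : model A)
    (W : St M -> St N -> Prop) q (T : St M -> Prop) (U : St N -> Prop) :
  wf phi -> pos q phi -> refines_rel B1 B2 W ->
  (forall x n, W x n -> forall r, Val M r x <-> Val N r n) ->
  (forall x n, W x n -> U n -> T x) ->
  forall x n, W x n -> sat phi (upd N q U) n -> sat (FEx B1 B2 phi) (upd M q T) x.
Proof.
move=> wphi pphi refW valW UT x n Wxn phin.
pose V : St (upd M q T) -> St (upd N q U) -> Prop := W.
have refV : refines_rel B1 B2 V := refW.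
have valV y m : V y m -> val_mono (fun r => r = q) (fun _ => False) m y.
  move=> Wym r /=; have valr := valW _ _ Wym r.
  case: eqP => [E|_]; split=> [_|nr]; [exact: UT | by case: nr | by move/valr | by move/valr].
exists (glue B1 V), (inl (x, n)); split; first exact: (refines_glue refV Wxn).
apply: (sat_mono_bisim wphi (glue_mono_bisim refV valV)) phin => // r -> //.
Qed.

Theorem mainTheorem7 (A : finType) (A1 A2 : {set A}) (q : atom) (eta : fixkind)
  (phi : form A) :
  A1 != set0 -> A2 != set0 -> [disjoint A1 & A2] ->
  wf phi -> pos q phi ->
  valid (FImp (FEx A1 A2 (FFix eta q phi)) (FFix eta q (FEx A1 A2 phi))).
Proof.
move=> _ _ _ wphi pphi M u /= [[N [v [/refines_exists_rel [W [Wuv refW valW]] fixv]]]]; apply.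
have transfer := sat_FEx_upd wphi pphi refW valW.
case: eta fixv; rewrite /FFix => fixv.
- move=> T preT.
  suff : forall x, W x v -> T x by apply.
  apply: (fixv (fun n => forall x, W x n -> T x)) => n phin x Wxn.
  by apply: preT; apply: transfer Wxn phin => y m Wym /(_ y Wym).
- have /sat_FNuP [U postU Uv] := fixv.
  apply/sat_FNuP; exists (fun x => exists2 n, W x n & U n); last by exists v.
  move=> x [n Wxn Un]; apply: transfer Wxn (postU _ Un) => y m Wym Um.
  by exists m.
Qed.
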